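(* Let $G$ be a simple complex Lie group with Lie algebra $\mathfrak g$, $\rho\colon G\to\mathrm{GL}(V)$ a faithful irreducible finite-dimensional complex representation with differential $\rho_*$, $T$ a maximal torus of $G$ with Lie algebra $\mathfrak t$. Suppose $g\in T$ and $x\in\mathfrak t$ satisfy $\rho(g)=\rho_*(x)$ in $\mathrm{End}(V)$. Let $e_1,\dots,e_n$ be a basis of $V$ of $T$-weight vectors with characters $\chi_1,\dots,\chi_n\in X^*(T)$. If $\chi_i,\chi_j,\chi_k$ are among these characters and $\chi_i\chi_k=\chi_j^2$, then $\chi_i(g)=\chi_j(g)=\chi_k(g)$.
   Context: Each character $\chi\in X^*(T)$ is identified with the linear form $t^*\in\mathfrak t^*$ satisfying $\chi(\exp(y))=\exp(t^*(y))$ for all $y\in\mathfrak t$; $t^*_l$ denotes the form corresponding to $\chi_l$, so that $\rho_*(x)e_l=t^*_l(x)e_l$. *)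

From HB Require Import structures.
From mathcomp Require Import all_boot all_order all_algebra.
From mathcomp Require Import complex.
Set Implicit Arguments. Unset Strict Implicit. Unset Printing Implicit Defensive.
Import Order.TTheory GRing.Theory Num.Theory.
Local Open Scope ring_scope.

(* The maximal torus T of rank r is modelled as (C^* )^r: a point is a row
   vector of complex numbers with all entries nonzero.  Its Lie algebra t is
   C^r, and exp is coordinatewise.  Every (algebraic) character of T is a
   monomial  t |-> prod_m t_m^(a_m)  with a : Z^r; the corresponding linear
   form on t (chi(exp y) = exp(t^*(y))) is  y |-> sum_m a_m y_m. *)

Definition in_torus (R : rcfType) (r : nat) (t : 'rV[R[i]]_r) : Prop :=
  forall m : 'I_r, t 0 m != 0.

Definition character (R : rcfType) (r : nat) (a : 'rV[int]_r)
  (t : 'rV[R[i]]_r) : R[i] := \prod_(m < r) (t 0 m) ^ (a 0 m).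

Definition linform (R : rcfType) (r : nat) (a : 'rV[int]_r)
  (y : 'rV[R[i]]_r) : R[i] := \sum_(m < r) (a 0 m)%:~R * y 0 m.

(* rho restricted to T, in the weight basis e_1..e_n with weights w l:
   rho(t) e_l = chi_l(t) e_l *)
Definition rhoT (R : rcfType) (r n : nat) (w : 'I_n -> 'rV[int]_r)
  (t : 'rV[R[i]]_r) : 'M[R[i]]_n :=
  diag_mx (\row_(l < n) character (w l) t).

(* the differential rho_* restricted to t: rho_*(y) e_l = t^*_l(y) e_l *)
Definition rhoD (R : rcfType) (r n : nat) (w : 'I_n -> 'rV[int]_r)
  (y : 'rV[R[i]]_r) : 'M[R[i]]_n :=
  diag_mx (\row_(l < n) linform (w l) y).

From HB Require Import structures.
From mathcomp Require Import all_boot all_order all_algebra.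
From mathcomp Require Import complex.
From mathcomp Require Import ring.
Import Order.TTheory GRing.Theory Num.Theory.
Local Open Scope ring_scope.

(* Evaluating chi_i chi_k = chi_j^2 at the torus points (1,..,1,2,1,..,1)
   gives the identity of weights w_i + w_k = 2 w_j, hence
   t^*_i + t^*_k = 2 t^*_j.  On the weight basis rho(g) = rho_*(x) says
   chi_l(g) = t^*_l(x) for every l, so the three numbers a = chi_i(g),
   b = chi_j(g), c = chi_k(g) have arithmetic mean b and product b^2; then
   (a - c)^2 = (a + c)^2 - 4ac = 0 forces a = b = c. *)

Lemma pexprzI (F : numFieldType) (x : F) : 0 < x -> x != 1 -> injective (exprz x).
Proof.
move=> x_gt0 x_neq1 m n e.
have ux : x \is a GRing.unit by rewrite unitfE gt_eqF.
have : x ^ (m - n) == 1 by rewrite exprzDr // e -exprzDr // subrr expr0z.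
by rewrite pexprz_eq1 ?ltW // (negPf x_neq1) orbF subr_eq0 => /eqP.
Qed.

Lemma mean_sqr_eq (D : idomainType) (a b c : D) : 2%:R != 0 :> D ->
  a + c = 2%:R * b -> a * c = b ^+ 2 -> a = b /\ b = c.
Proof.
move=> two_neq0 sum_ac prod_ac.
have a_eq_c : a = c.
  suff : (a - c) ^+ 2 == 0 by rewrite expf_eq0 /= subr_eq0 => /eqP.
  have -> : (a - c) ^+ 2 = (a + c) ^+ 2 - 4%:R * (a * c) by ring.
  by rewrite sum_ac prod_ac; apply/eqP; ring.
suff a_eq_b : a = b by rewrite -a_eq_b.
by apply: (mulfI two_neq0); rewrite -sum_ac a_eq_c; ring.
Qed.

Section Characters.
Set Implicit Arguments.

Variables (R : rcfType) (r : nat).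
Implicit Types (a b : 'rV[int]_r) (t y : 'rV[R[i]]_r).

Lemma character0 t : character 0 t = 1.
Proof. by rewrite /character big1 // => m _; rewrite mxE expr0z. Qed.

Lemma characterD a b t : in_torus t ->
  character (a + b) t = character a t * character b t.
Proof.
move=> tT; rewrite /character -big_split; apply: eq_bigr => m _ /=.
by rewrite mxE exprzDr // unitfE.
Qed.

Lemma characterMn a t k : in_torus t -> character (a *+ k) t = character a t ^+ k.
Proof.
move=> tT; elim: k => [|k IHk]; first by rewrite mulr0n character0.
by rewrite mulrS characterD // IHk exprS.
Qed.

Definition two_at (m0 : 'I_r) : 'rV[R[i]]_r := \row_m (if m == m0 then 2 else 1).

Lemma character_two_at a (m0 : 'I_r) : character a (two_at m0) = 2 ^ a 0 m0.
Proof.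
rewrite /character (bigD1 m0) //= mxE eqxx big1 ?mulr1 // => m /negbTE m_neq.
by rewrite mxE m_neq exp1rz.
Qed.

Lemma two_at_in_torus (m0 : 'I_r) : in_torus (two_at m0).
Proof. by move=> m; rewrite mxE; case: ifP; rewrite ?oner_eq0 ?pnatr_eq0. Qed.

Lemma character_inj a b :
  (forall t, in_torus t -> character a t = character b t) -> a = b.
Proof.
move=> eq_ab; apply/rowP => m; rewrite -(ord1 0).
apply: (@pexprzI R[i] 2); rewrite ?ltr0n ?pnatr_eq1 //.
by rewrite -!character_two_at eq_ab //; apply: two_at_in_torus.
Qed.

Lemma linformD a b y : linform (a + b) y = linform a y + linform b y.
Proof.
rewrite /linform -big_split; apply: eq_bigr => m _ /=.
by rewrite mxE intrD mulrDl.
Qed.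

Lemma linformMn a y k : linform (a *+ k) y = linform a y *+ k.
Proof.
elim: k => [|k IHk]; last by rewrite mulrS linformD IHk mulrS.
by rewrite mulr0n /linform big1 // => m _; rewrite mxE mul0r.
Qed.

Lemma rhoT_eq_rhoD_character (n : nat) (w : 'I_n -> 'rV[int]_r) t y l :
  rhoT w t = rhoD w y -> character (w l) t = linform (w l) y.
Proof.
move=> /(congr1 (fun M : 'M_n => M l l)).
by rewrite /rhoT /rhoD !mxE eqxx !mulr1n.
Qed.

End Characters.

Theorem lemma2 (R : rcfType) (r n : nat) (w : 'I_n -> 'rV[int]_r)
  (g : 'rV[R[i]]_r) (x : 'rV[R[i]]_r) (i j k : 'I_n) :
  in_torus g ->
  rhoT w g = rhoD w x ->
  (forall t : 'rV[R[i]]_r, in_torus t ->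
     character (w i) t * character (w k) t = character (w j) t ^+ 2) ->
  character (w i) g = character (w j) g /\ character (w j) g = character (w k) g.
Proof.
move=> gT rho_eq char_rel.
have weights : w i + w k = w j *+ 2.
  by apply: character_inj => t tT; rewrite characterD // characterMn //; apply: char_rel.
have lin_sum : linform (w i) x + linform (w k) x = 2%:R * linform (w j) x.
  by rewrite -linformD weights linformMn mulr_natl.
have := char_rel g gT; rewrite !(rhoT_eq_rhoD_character _ rho_eq).
by apply: mean_sqr_eq lin_sum; rewrite pnatr_eq0.
Qed.
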